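(* Let $D$ be an oriented graph whose missing graph is a vertex-disjoint union of paths, and let $\Delta$ be its dependency digraph. Let $abc$ and $xyz$ be two distinct connected components of the missing graph, each a path with edges $ab,bc$ and $xy,yz$ respectively, such that $d^+_\Delta(ab)=d^+_\Delta(bc)=2$ and $d^-_\Delta(xy)=d^-_\Delta(yz)=2$. If $ab$ loses to $xy$, then $ab$ loses to $yz$, $bc$ loses to $xy$, and $bc$ loses to $yz$.
   Context: All digraphs are finite oriented graphs. $N^+(v)$ is the out-neighborhood; $N^{++}(v)$ is the set of vertices $w\notin N^+(v)\cup\{v\}$ with $u\to w$ for some $u\in N^+(v)$. A missing edge is a pair of distinct non-adjacent vertices; the missing graph is formed by the missing edges. For missing edges $\{x,y\},\{a,b\}$, $\{x,y\}$ loses to $\{a,b\}$ if the endpoints can be labelled so that $x\to a$, $b\notin N^+(x)\cup N^{++}(x)$, $y\to b$, $a\notin N^+(y)\cup N^{++}(y)$. The dependency digraph $\Delta$ has the missing edges as vertices and arcs $(e,e')$ whenever $e$ loses to $e'$. *)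

From mathcomp Require Import all_boot.
Set Implicit Arguments. Unset Strict Implicit. Unset Printing Implicit Defensive.

Definition oriented (V : finType) (arc : rel V) : Prop :=
  irreflexive arc /\ (forall u v, arc u v -> ~~ arc v u).

Section Defs.
Variables (V : finType) (arc : rel V).

Definition outN (v : V) : {set V} := [set w | arc v w].
Definition outN2 (v : V) : {set V} :=
  [set w | (w \notin outN v) && (w != v) && [exists u in outN v, arc u w]].

Definition missing (x y : V) : bool := (x != y) && ~~ arc x y && ~~ arc y x.

Definition missing_edge (e : {set V}) : bool :=
  [exists x, exists y, missing x y && (e == [set x; y])].

Definition loses_lab (x y a b : V) : bool :=
  [&& arc x a, b \notin outN x :|: outN2 x, arc y b & a \notin outN y :|: outN2 y].

Definition loses (e f : {set V}) : bool :=
  [exists x, exists y, exists a, exists b,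
    [&& e == [set x; y], f == [set a; b] & loses_lab x y a b]].

Definition dep_outdeg (e : {set V}) : nat := #|[set f | missing_edge f && loses e f]|.
Definition dep_indeg (e : {set V}) : nat := #|[set f | missing_edge f && loses f e]|.

Definition missing_union_of_paths : Prop :=
  (forall v : V, #|[set w | missing v w]| <= 2) /\
  (forall s : seq V, uniq s -> 3 <= size s -> ~~ cycle missing s).

Definition path3_component (a b c : V) : Prop :=
  [/\ uniq [:: a; b; c], missing a b & missing b c] /\
  [/\ (forall w, missing a w -> w = b),
      (forall w, missing c w -> w = b) &
      (forall w, missing b w -> w = a \/ w = c)].

End Defs.

From mathcomp Require Import all_boot.
Set Implicit Arguments. Unset Strict Implicit. Unset Printing Implicit Defensive.

(* If [pq] loses to [rs] via [p -> r], [q -> s], then [p] has no 2-path to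
   [s] and [q] none to [r].  Hence a missing edge cannot lose to two edges
   that are completely joined (every vertex of one adjacent to every vertex
   of the other), since an adjacency between them would close such a 2-path;
   dually, two completely joined missing edges cannot lose to a common edge.
   Every missing edge outside a component [xyz] of the missing graph is
   completely joined to [xy].  So if [ab] has out-degree 2 in the dependency
   digraph and loses to [xy], its other out-neighbour must be [yz]; and if
   [xy] has in-degree 2 and [ab] loses to it, its other in-neighbour must be
   [bc]. *)

Lemma card2_other (T : finType) (S : {set T}) e :
  #|S| = 2 -> e \in S -> exists2 f, f \in S & f != e.
Proof.
move=> + eS; rewrite (cardsD1 e) eS => -[] /eqP/cards1P[f Ef].
have : f \in S :\ e by rewrite Ef set11.
by rewrite !inE => /andP[fe fS]; exists f.
Qed.

Section Dependency.
Variables (V : finType) (arc : rel V).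

Definition adjacent (u v : V) : bool := arc u v || arc v u.

Lemma missingC u v : missing arc u v = missing arc v u.
Proof. by rewrite /missing eq_sym andbAC. Qed.

Lemma missingE u v : missing arc u v = (u != v) && ~~ adjacent u v.
Proof. by rewrite /missing /adjacent negb_or andbA. Qed.

Lemma eq_set2 (p q r s : V) :
  [set p; q] = [set r; s] -> (p = r /\ q = s) \/ (p = s /\ q = r).
Proof.
move=> E.
have : p \in [set r; s] by rewrite -E set21.
have : q \in [set r; s] by rewrite -E set22.
have : r \in [set p; q] by rewrite E set21.
have : s \in [set p; q] by rewrite E set22.
by rewrite !inE; do 4 case/orP=> /eqP ?; subst; auto.
Qed.

Lemma missing_edge_set2 p q : missing_edge arc [set p; q] = missing arc p q.
Proof.
apply/existsP/idP => [[u /existsP[w /andP[m /eqP E]]] | m]; last first.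
  by exists p; apply/existsP; exists q; rewrite m eqxx.
by case: (eq_set2 E) => -[-> ->]; rewrite // missingC.
Qed.

Lemma missing_edgeP e :
  missing_edge arc e -> exists p q, e = [set p; q] /\ missing arc p q.
Proof. by case/existsP=> p /existsP[q /andP[m /eqP->]]; exists p, q. Qed.

Lemma loses_labC p q r s : loses_lab arc p q r s = loses_lab arc q p s r.
Proof. by apply/and4P/and4P => -[]. Qed.

Lemma loses_lab_source p q g : loses arc [set p; q] g ->
  exists r s, g = [set r; s] /\ loses_lab arc p q r s.
Proof.
case/existsP=> u /existsP[w /existsP[r /existsP[s /and3P[/eqP E /eqP -> L]]]].
case: (eq_set2 E) => -[-> ->]; first by exists r, s.
by exists s, r; rewrite setUC -loses_labC.
Qed.

Lemma loses_lab_target r s e : loses arc e [set r; s] ->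
  exists p q, e = [set p; q] /\ loses_lab arc p q r s.
Proof.
case/existsP=> p /existsP[q /existsP[u /existsP[w /and3P[/eqP -> /eqP E L]]]].
case: (eq_set2 E) => -[-> ->]; first by exists p, q.
by exists q, p; rewrite setUC -loses_labC.
Qed.

Lemma loses_lab_no_2path p q r s u :
  missing arc p q -> loses_lab arc p q r s -> arc p u -> ~~ arc u s.
Proof.
case/andP=> _ nqp /and4P[_ sN qs _] pu; apply: contra sN => us.
rewrite !inE; case: (boolP (arc p s)) => //= nps.
have sp : s != p by apply: contraNneq nqp => <-.
by rewrite sp; apply/existsP; exists u; rewrite inE pu.
Qed.

Lemma loses_lab_targets_nonadjacent p q r s r' s' : missing arc p q ->
  loses_lab arc p q r s -> loses_lab arc p q r' s' -> ~~ adjacent s r'.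
Proof.
move=> m L L'; have /and4P[_ _ qs _] := L; have /and4P[pr' _ _ _] := L'.
rewrite missingC in m; rewrite loses_labC in L'.
by rewrite /adjacent negb_or (loses_lab_no_2path m L' qs)
           (loses_lab_no_2path _ L pr') // missingC.
Qed.

Lemma loses_lab_sources_nonadjacent p q p' q' r s :
  missing arc p q -> missing arc p' q' ->
  loses_lab arc p q r s -> loses_lab arc p' q' r s -> ~~ adjacent p q'.
Proof.
move=> m m' L L'; have /and4P[pr _ _ _] := L; have /and4P[_ _ q's _] := L'.
rewrite missingC in m'; rewrite loses_labC in L'.
rewrite /adjacent negb_or; apply/andP; split.
- by apply: contraL q's; apply: loses_lab_no_2path m L.
- by apply: contraL pr; apply: loses_lab_no_2path m' L'.
Qed.

Lemma loses_joined_targets e f g : missing_edge arc e ->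
  loses arc e f -> loses arc e g -> ~ {in f & g, forall v t, adjacent v t}.
Proof.
case/missing_edgeP=> p [q [-> m]].
move=> /loses_lab_source[r [s [-> L]]] /loses_lab_source[r' [s' [-> L']]] J.
by move: (loses_lab_targets_nonadjacent m L L'); rewrite J ?set21 ?set22.
Qed.

Lemma loses_joined_sources e f r s :
  missing_edge arc e -> missing_edge arc f ->
  loses arc e [set r; s] -> loses arc f [set r; s] ->
  ~ {in e & f, forall v t, adjacent v t}.
Proof.
move=> me mf /loses_lab_target[p [q [Ee L]]] /loses_lab_target[p' [q' [Ef L']]].
rewrite {}Ee {}Ef !missing_edge_set2 in me mf * => J.
by move: (loses_lab_sources_nonadjacent me mf L L'); rewrite J ?set21 ?set22.
Qed.

Section Component.
Variables x y z : V.
Hypothesis xyz_comp : path3_component arc x y z.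

Lemma path3_component_closed v u :
  v \in [set x; y; z] -> missing arc v u -> u \in [set x; y; z].
Proof.
case: xyz_comp => _ [hx hz hy]; rewrite !inE => /orP[/orP[]|]/eqP-> m.
- by rewrite (hx _ m) eqxx orbT.
- by case: (hy _ m) => ->; rewrite eqxx ?orbT.
- by rewrite (hz _ m) eqxx orbT.
Qed.

Lemma path3_component_other_edge u w : missing arc u w ->
  [set u; w] != [set x; y] -> [set u; w] != [set y; z] ->
  u \notin [set x; y; z].
Proof.
case: xyz_comp => _ [hx hz hy] m nxy nyz; rewrite !inE.
apply/negP => /orP[/orP[]|]/eqP Eu; subst u.
- by rewrite (hx _ m) eqxx in nxy.
- case: (hy _ m) => Ew; subst w; first by rewrite setUC eqxx in nxy.
  by rewrite eqxx in nyz.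
- by rewrite (hz _ m) setUC eqxx in nyz.
Qed.

Lemma path3_component_joined f : missing_edge arc f ->
  f != [set x; y] -> f != [set y; z] ->
  {in [set x; y; z] & f, forall v t, adjacent v t}.
Proof.
case/missing_edgeP=> u [w [-> m]] nxy nyz v t vC.
have tC : t \in [set u; w] -> t \notin [set x; y; z].
  case/set2P=> ->; first exact: path3_component_other_edge m nxy nyz.
  by apply: (path3_component_other_edge (w := u)); rewrite 1?missingC 1?setUC.
move=> /tC tnC; have vt : v != t by apply: contraNneq tnC => <-.
apply: contraR tnC => nadj; apply: path3_component_closed vC _.
by rewrite missingE vt.
Qed.

Lemma path3_component_joined_edge f : missing_edge arc f ->
  f != [set x; y] -> f != [set y; z] ->
  {in [set x; y] & f, forall v t, adjacent v t}.
Proof.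
move=> mf nxy nyz; apply: sub_in11 (path3_component_joined mf nxy nyz) => //.
by move=> v; rewrite !inE => ->.
Qed.

End Component.

Lemma outdeg2_loses_component e x y z :
  path3_component arc x y z -> missing_edge arc e ->
  dep_outdeg arc e = 2 -> loses arc e [set x; y] -> loses arc e [set y; z].
Proof.
move=> xyz_comp me deg L.
have xyS : [set x; y] \in [set f | missing_edge arc f && loses arc e f].
  by case: xyz_comp => -[_ mxy _] _; rewrite inE L missing_edge_set2 mxy.
have [f] := card2_other deg xyS; rewrite inE => /andP[mf Lf] fxy.
have [<- // | fyz] := eqVneq f [set y; z].
have J := path3_component_joined_edge xyz_comp mf fxy fyz.
by case: (loses_joined_targets me L Lf J).
Qed.

Lemma indeg2_loses_component a b c x y :
  path3_component arc a b c ->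
  dep_indeg arc [set x; y] = 2 -> loses arc [set a; b] [set x; y] ->
  loses arc [set b; c] [set x; y].
Proof.
move=> abc_comp deg L.
have mab : missing_edge arc [set a; b].
  by case: abc_comp => -[_ mab _] _; rewrite missing_edge_set2.
have abS :
    [set a; b] \in [set f | missing_edge arc f && loses arc f [set x; y]].
  by rewrite inE L mab.
have [f] := card2_other deg abS; rewrite inE => /andP[mf Lf] fab.
have [<- // | fbc] := eqVneq f [set b; c].
have J := path3_component_joined_edge abc_comp mf fab fbc.
by case: (loses_joined_sources mab mf L Lf J).
Qed.

End Dependency.

Theorem lemma4p3 (V : finType) (arc : rel V) (a b c x y z : V) :
  oriented arc ->
  missing_union_of_paths arc ->
  path3_component arc a b c ->
  path3_component arc x y z ->
  [set a; b; c] != [set x; y; z] ->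
  dep_outdeg arc [set a; b] = 2 ->
  dep_outdeg arc [set b; c] = 2 ->
  dep_indeg arc [set x; y] = 2 ->
  dep_indeg arc [set y; z] = 2 ->
  loses arc [set a; b] [set x; y] ->
  [/\ loses arc [set a; b] [set y; z],
      loses arc [set b; c] [set x; y] &
      loses arc [set b; c] [set y; z]].
Proof.
move=> _ _ abc_comp xyz_comp _ out_ab out_bc in_xy _ L.
have [[_ mab mbc] _] := abc_comp.
rewrite -missing_edge_set2 in mab; rewrite -missing_edge_set2 in mbc.
have L' := indeg2_loses_component abc_comp in_xy L.
split; [exact: outdeg2_loses_component xyz_comp mab out_ab L | exact: L' |].
exact: outdeg2_loses_component xyz_comp mbc out_bc L'.
Qed.
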